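(* Let $1\le k<d$, $\mu>0$, $u\in\mathbb{R}^d$ with $u_1\ge\cdots\ge u_d\ge0$, $\bar u_i=u_i/(1+\mu)$ for $i\in[k]$, and let $\tilde x=\mathrm{argmin}_{x\in\mathbb{R}^d}\{\mu\|x\|_{k,2}^2+\|x-u\|^2\}$. Then there exist indices $j_s\in\{1,\dots,k\}$, $j_e\in\{k,\dots,d\}$ and a number $\xi$ with $u_{j_e+1}\le\xi\le\bar u_{j_s-1}$ (with the conventions $\bar u_0=+\infty$, $u_{d+1}=0$) such that $$\tilde x=(\bar u_1,\dots,\bar u_{j_s-1},\underbrace{\xi,\dots,\xi}_{\text{positions } j_s,\dots,j_e},u_{j_e+1},\dots,u_d)^\top .$$ Moreover, for arbitrary $v\in\mathbb{R}^d$, if $u=\sigma(|v|)$ where $|v|=(|v_1|,\dots,|v_d|)$ and $\sigma$ is a permutation of coordinates sorting $|v|$ in non-increasing order, then $\mathrm{prox}_{\frac{\mu}{2}\|\cdot\|_{k,2}^2}(v)=\mathrm{sign}(v)\odot\sigma^{-1}(\tilde x)$.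
   Context: $\|\cdot\|$ is the Euclidean norm. For $z\in\mathbb{R}^m$ and integer $j\ge0$, $\|z\|_{j,2}$ is the Euclidean norm of the vector obtained from $z$ by keeping (up to) $j$ entries of largest absolute value and setting the others to $0$. For convex $g$, $\mathrm{prox}_g(x)=\mathrm{argmin}_y\{g(y)+\frac12\|x-y\|^2\}$. $\mathrm{sign}(v)\in\{-1,1\}^d$ has $i$th entry $1$ if $v_i\ge0$ and $-1$ otherwise; $\odot$ is the entrywise product; $\sigma$ and $\sigma^{-1}$ act on vectors by permuting coordinates, with $\sigma^{-1}(\sigma(x))=x$. *)

From HB Require Import structures.
From mathcomp Require Import all_boot all_order all_algebra all_fingroup.
Set Implicit Arguments. Unset Strict Implicit. Unset Printing Implicit Defensive.
Import Order.TTheory GRing.Theory Num.Theory.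
Local Open Scope ring_scope.

Section Defs.
Variables (R : rcfType) (d : nat).

Definition norm2 (x : 'I_d -> R) : R := Num.sqrt (\sum_(i < d) x i ^+ 2).

Definition topk_norm (j : nat) (z : 'I_d -> R) : R :=
  Num.sqrt (\sum_(a <- take j (sort (fun a b : R => b <= a)
                                   [seq `|z i| | i <- enum 'I_d])) a ^+ 2).

Definition is_argmin (F : ('I_d -> R) -> R) (x : 'I_d -> R) : Prop :=
  forall y, F x <= F y.

Definition obj (k : nat) (mu : R) (u x : 'I_d -> R) : R :=
  mu * topk_norm k x ^+ 2 + norm2 (fun i => x i - u i) ^+ 2.

Definition prox_obj (k : nat) (mu : R) (v y : 'I_d -> R) : R :=
  mu / 2 * topk_norm k y ^+ 2 + 1 / 2 * norm2 (fun i => v i - y i) ^+ 2.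

(* 1-based coordinate access, with u_p = 0 outside 1..d (so u_{d+1} = 0) *)
Definition coord1 (u : 'I_d -> R) (p : nat) : R :=
  odflt 0 (omap u (insub p.-1 : option 'I_d)).

Definition sgnv (v : 'I_d -> R) : 'I_d -> R :=
  fun i => if 0 <= v i then 1 else -1.

Definition permv (s : {perm 'I_d}) (x : 'I_d -> R) : 'I_d -> R :=
  fun i => x (s i).

End Defs.

(* The squared top-k norm is a maximum of linear functions:
   ||x||_{k,2}^2 = max { sum_i w_i x_i^2 | 0 <= w_i <= 1, sum_i w_i = k },
   attained exactly by the weights that are 1 above and 0 below the k-th largest
   x_i^2.  Hence if u = (1 + mu w) .* x for such a top weight w of x, then for every y
     obj(y) - obj(x) >= sum_i (1 + mu w_i) (y_i - x_i)^2 >= ||y - x||^2,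
   so x is the unique minimizer.  For sorted u >= 0 such a pair is found by
   thresholding: x_i(c) is the median of u_i/(1+mu), c and u_i, the induced weight
   sum is a continuous piecewise affine function of c, and a root of
   "weight sum = k" exists by the intermediate value theorem.  Sortedness of u turns
   x(c) into the block form.  For the prox, |v_i - y_i| >= ||v_i| - |y_i|| and the
   invariance of ||.||_{k,2} under signed permutations reduce to the sorted case. *)

From HB Require Import structures.
From mathcomp Require Import all_boot all_order all_algebra all_fingroup.
From mathcomp Require Import ring lra zify.
From Stdlib Require Import FunctionalExtensionality.
Import Order.TTheory GRing.Theory Num.Theory.
Local Open Scope ring_scope.
Set Implicit Arguments. Unset Strict Implicit. Unset Printing Implicit Defensive.

(* For every threshold [t], the top-[k] sum and every weighted sum with weights in [0, 1]
   summing to [k] are at most [k t + sum_i (b_i - t)^+]; the top-[k] sum attains it at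
   its [k+1]-st largest value, a top weight at its own threshold. *)
Section TopSum.
Variables (R : realFieldType) (I : eqType) (b : I -> R) (k : nat).

Lemma sumr_const_seq (J : Type) (s : seq J) (c : R) : \sum_(i <- s) c = (size s)%:R * c.
Proof. by rewrite big_const_seq count_predT iter_addr_0 mulr_natl. Qed.

Lemma weighted_sum_le_excess (S : seq I) (w : I -> R) (t : R) :
  (forall i, 0 <= w i <= 1) -> \sum_(i <- S) w i = k%:R ->
  \sum_(i <- S) w i * b i <= k%:R * t + \sum_(i <- S) Num.max (b i - t) 0.
Proof.
move=> w01 sw.
have -> : \sum_(i <- S) w i * b i = k%:R * t + \sum_(i <- S) w i * (b i - t).
  by rewrite -sw mulr_suml -big_split; apply: eq_bigr => i _ /=; ring.
rewrite lerD2l; apply: ler_sum => i _; have /andP[w0 w1] := w01 i.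
case: (leP 0 (b i - t)) => h; nra.
Qed.

Lemma weighted_sum_eq_excess (S : seq I) (w : I -> R) (t : R) :
  (forall i, t < b i -> w i = 1) -> (forall i, b i < t -> w i = 0) ->
  \sum_(i <- S) w i = k%:R ->
  \sum_(i <- S) w i * b i = k%:R * t + \sum_(i <- S) Num.max (b i - t) 0.
Proof.
move=> w1 w0 sw.
rewrite -sw mulr_suml -big_split; apply: eq_bigr => i _ /=.
case: (ltgtP t (b i)) => h.
- by rewrite w1 // max_l ?subr_ge0 ?ltW //; ring.
- by rewrite w0 // max_r ?subr_le0 ?ltW //; ring.
- by rewrite h subrr maxxx; ring.
Qed.

Lemma sum_take_le_excess (S : seq I) (t : R) : (k <= size S)%N ->
  \sum_(i <- take k S) b i <= k%:R * t + \sum_(i <- S) Num.max (b i - t) 0.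
Proof.
move=> kS.
have -> : \sum_(i <- take k S) b i = k%:R * t + \sum_(i <- take k S) (b i - t).
  by rewrite sumrB sumr_const_seq size_takel // addrC subrK.
rewrite lerD2l -{2}(cat_take_drop k S) big_cat /=.
rewrite -[X in X <= _]addr0; apply: lerD; first by apply: ler_sum => i _; rewrite le_max lexx.
by apply: sumr_ge0 => i _; rewrite le_max lexx orbT.
Qed.

Lemma sum_take_sorted_excess (S : seq I) :
  sorted (fun i j => b j <= b i) S -> (k < size S)%N ->
  exists t, \sum_(i <- take k S) b i = k%:R * t + \sum_(i <- S) Num.max (b i - t) 0.
Proof.
move=> srt ltk.
have tr : transitive (fun i j => b j <= b i) by move=> x y z /= h1 h2; exact: le_trans h2 h1.
rewrite sorted_pairwise // -(cat_take_drop k S) pairwise_cat in srt.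
case/and3P: srt => take_ge _.
have : (0 < size (drop k S))%N by rewrite size_drop subn_gt0.
case ed: (drop k S) => [|j0 rest] //= _ /andP[rest_le _]; rewrite ed in take_ge.
exists (b j0).
have top_ge i : i \in take k S -> b j0 <= b i.
  by move=> iS; move/allrelP: take_ge; apply => //; rewrite inE eqxx.
have bot_le i : i \in j0 :: rest -> b i <= b j0.
  by rewrite inE => /predU1P[-> // | /(allP rest_le)].
have drop0 : \sum_(i <- j0 :: rest) Num.max (b i - b j0) 0 = 0.
  by rewrite big1_seq // => i /andP[_ /bot_le h]; rewrite max_r // subr_le0.
rewrite -{2}(cat_take_drop k S) ed big_cat /= drop0 addr0.
have -> : \sum_(i <- take k S) Num.max (b i - b j0) 0 = \sum_(i <- take k S) (b i - b j0).
  by apply: eq_big_seq => i /top_ge h; rewrite max_l // subr_ge0.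
by rewrite sumrB sumr_const_seq (size_takel (ltnW ltk)) addrC subrK.
Qed.
End TopSum.

Section TopkNorm.
Variables (R : rcfType) (d k : nat).
Implicit Types (z w : 'I_d -> R).

Definition sort_by_abs z : seq 'I_d :=
  sort (relpre (fun i => `|z i|) (fun a b : R => b <= a)) (enum 'I_d).

Lemma topk_normE z : topk_norm k z ^+ 2 = \sum_(i <- take k (sort_by_abs z)) z i ^+ 2.
Proof.
rewrite /topk_norm sqr_sqrtr; last by apply: sumr_ge0 => i _; apply: sqr_ge0.
by rewrite sort_map -map_take big_map; apply: eq_bigr => i _; rewrite real_normK ?num_real.
Qed.

Lemma sort_by_abs_sorted z : sorted (fun i j => z j ^+ 2 <= z i ^+ 2) (sort_by_abs z).
Proof.
apply: (@sub_sorted _ (relpre (fun i => `|z i|) (fun a b : R => b <= a))).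
  move=> i j /= le_ij.
  by rewrite -(real_normK (num_real (z i))) -(real_normK (num_real (z j))) lerXn2r ?nnegrE.
by apply: sort_sorted => i j /=; exact: le_total.
Qed.

Lemma big_sort_by_abs z (F : 'I_d -> R) : \sum_(i <- sort_by_abs z) F i = \sum_(i < d) F i.
Proof. by rewrite (perm_big (enum 'I_d)) ?big_enum // perm_sort. Qed.

Lemma size_sort_by_abs z : size (sort_by_abs z) = d.
Proof. by rewrite size_sort size_enum_ord. Qed.

Lemma weighted_sqr_le_topk_norm z w : (k < d)%N ->
  (forall i, 0 <= w i <= 1) -> \sum_(i < d) w i = k%:R ->
  \sum_(i < d) w i * z i ^+ 2 <= topk_norm k z ^+ 2.
Proof.
move=> kd w01 sw; rewrite topk_normE.
have [|t ->] := sum_take_sorted_excess (k := k) (sort_by_abs_sorted z).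
  by rewrite size_sort_by_abs.
rewrite -(big_sort_by_abs z).
by apply: weighted_sum_le_excess; rewrite ?big_sort_by_abs.
Qed.

Lemma topk_norm_le_weighted_sqr z w tau : (k <= d)%N ->
  (forall i, tau < z i ^+ 2 -> w i = 1) -> (forall i, z i ^+ 2 < tau -> w i = 0) ->
  \sum_(i < d) w i = k%:R ->
  topk_norm k z ^+ 2 <= \sum_(i < d) w i * z i ^+ 2.
Proof.
move=> kd w1 w0 sw; rewrite topk_normE -(big_sort_by_abs z).
rewrite (weighted_sum_eq_excess (b := fun i => z i ^+ 2) (k := k) (w := w) (t := tau)) //.
  by apply: sum_take_le_excess; rewrite size_sort_by_abs.
by rewrite big_sort_by_abs.
Qed.

Lemma topk_norm_perm_abs (s : {perm 'I_d}) z z' :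
  (forall i, `|z' i| = `|z (s i)|) -> topk_norm k z' = topk_norm k z.
Proof.
move=> zz'; rewrite /topk_norm; congr (Num.sqrt (\sum_(a <- take k _) _)).
apply/perm_sortP => //; first by move=> a b; exact: le_total.
- by move=> a b c h1 h2; exact: le_trans h2 h1.
- by move=> a b /andP[h1 h2]; apply: le_anti; rewrite h1 h2.
have -> : [seq `|z' i| | i <- enum 'I_d] = [seq `|z i| | i <- map s (enum 'I_d)].
  by rewrite -[RHS]map_comp; apply: eq_map => i /=; rewrite zz'.
apply: perm_map; apply: uniq_perm; last 1 first.
- by move=> i; rewrite mem_enum; apply/mapP; exists ((s^-1)%g i); rewrite ?mem_enum ?permKV.
- by rewrite map_inj_uniq ?enum_uniq //; exact: perm_inj.
- exact: enum_uniq.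
Qed.

End TopkNorm.

Section Growth.
Variables (R : rcfType) (d : nat).
Implicit Types (x y w : 'I_d -> R).

Lemma norm2_sqr (f : 'I_d -> R) : norm2 f ^+ 2 = \sum_(i < d) f i ^+ 2.
Proof. by rewrite sqr_sqrtr //; apply: sumr_ge0 => i _; apply: sqr_ge0. Qed.

Lemma sum_sqr_eq0 (f : 'I_d -> R) : \sum_(i < d) f i ^+ 2 <= 0 -> forall i, f i = 0.
Proof.
move=> le0 i; apply/eqP; rewrite -sqrf_eq0; apply/eqP.
move: i isT; apply/psumr_eq0P => [i _|]; first exact: sqr_ge0.
by apply/le_anti; rewrite le0 sumr_ge0 // => i _; apply: sqr_ge0.
Qed.

Definition is_top_weight k x w (tau : R) :=
  [/\ forall i, 0 <= w i <= 1, \sum_(i < d) w i = k%:R,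
      forall i, tau < x i ^+ 2 -> w i = 1 & forall i, x i ^+ 2 < tau -> w i = 0].

Lemma obj_growth k (mu : R) (u x w : 'I_d -> R) tau :
  (k < d)%N -> 0 <= mu -> is_top_weight k x w tau ->
  (forall i, u i = (1 + mu * w i) * x i) ->
  forall y, obj k mu u x + \sum_(i < d) (y i - x i) ^+ 2 <= obj k mu u y.
Proof.
move=> kd mu0 [w01 sw w1 w0] ue y; rewrite /obj !norm2_sqr.
have Ty := ler_wpM2l mu0 (weighted_sqr_le_topk_norm y kd w01 sw).
have Tx := ler_wpM2l mu0 (topk_norm_le_weighted_sqr (ltnW kd) w1 w0 sw).
suff : mu * (\sum_(i < d) w i * x i ^+ 2) + \sum_(i < d) (x i - u i) ^+ 2
       + \sum_(i < d) (y i - x i) ^+ 2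
    <= mu * (\sum_(i < d) w i * y i ^+ 2) + \sum_(i < d) (y i - u i) ^+ 2.
  lra.
rewrite !mulr_sumr -!big_split /=; apply: ler_sum => i _.
rewrite ue; have /andP[w0i _] := w01 i.
(* the slack of each term is [mu w_i (y_i - x_i)^2] *)
have -> : mu * (w i * y i ^+ 2) + (y i - (1 + mu * w i) * x i) ^+ 2 =
  mu * (w i * x i ^+ 2) + (x i - (1 + mu * w i) * x i) ^+ 2 + (y i - x i) ^+ 2
  + mu * w i * (y i - x i) ^+ 2 by ring.
by rewrite lerDl; apply: mulr_ge0; [apply: mulr_ge0 | apply: sqr_ge0].
Qed.

Lemma argmin_eq_of_growth (F : ('I_d -> R) -> R) x xt :
  (forall y, F x + \sum_(i < d) (y i - x i) ^+ 2 <= F y) -> is_argmin F xt -> xt = x.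
Proof.
move=> grow xt_min; apply: functional_extensionality => i; apply/eqP; rewrite -subr_eq0; apply/eqP.
by apply: (sum_sqr_eq0 (f := fun i => xt i - x i)); have := grow xt; have := xt_min x; lra.
Qed.

End Growth.

Section PiecewiseAffineIVT.
Variable R : realFieldType.
Implicit Types (f : R -> R) (a b x y : R).

Definition affine_on f x y :=
  forall l : R, 0 <= l <= 1 -> f (x + l * (y - x)) = f x + l * (f y - f x).

Lemma affine_on_root f a b : a <= b -> 0 <= f a -> f b <= 0 ->
  affine_on f a b -> exists2 c, a <= c <= b & f c = 0.
Proof.
move=> ab fa fb f_aff.
have [fab0|fab_neq0] := eqVneq (f a - f b) 0; first by exists a; rewrite ?lexx ?ab //; lra.
have fab_gt0 : 0 < f a - f b by rewrite lt_def fab_neq0 /=; lra.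
pose l := f a / (f a - f b).
have l0 : 0 <= l by exact: divr_ge0 fa (ltW fab_gt0).
have l1 : l <= 1 by rewrite /l ler_pdivrMr // mul1r; lra.
exists (a + l * (b - a)).
  have ba0 : 0 <= b - a by rewrite subr_ge0.
  have : l * (b - a) <= 1 * (b - a) by apply: ler_wpM2r.
  by have := mulr_ge0 l0 ba0; lra.
rewrite f_aff ?l0 ?l1 // /l.
by rewrite -[f b - f a]opprB mulrN mulfVK // subrr.
Qed.

Lemma piecewise_affine_root f (Q : seq R) a b :
  a <= b -> 0 <= f a -> f b <= 0 ->
  (forall x y, a <= x -> x <= y -> y <= b ->
      (forall q, q \in Q -> ~~ (x < q < y)) -> affine_on f x y) ->
  exists2 c, a <= c <= b & f c = 0.
Proof.
elim: {Q}(size Q) {-2}Q (leqnn (size Q)) a b => [|n IH] Q szQ a b ab fa fb f_aff.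
  apply: affine_on_root => //; apply: f_aff => // q.
  by move: szQ; rewrite leqn0 => /nilP ->.
have [/hasP[q qQ /andP[aq qb]] | noQ] := boolP (has (fun q => a < q < b) Q); last first.
  apply: affine_on_root => //; apply: f_aff => // q qQ.
  by apply: contra noQ => h; apply/hasP; exists q.
have szr : (size (rem q Q) <= n)%N by rewrite size_rem //; case: (Q) szQ.
have memQ q' : q' \in Q -> q' = q \/ q' \in rem q Q.
  by have [->|ne] := eqVneq q' q; [left | right; exact: rem_mem].
have [fq|fq] := lerP 0 (f q).
- have [c /andP[qc cb] fc] : exists2 c, q <= c <= b & f c = 0.
    apply: (IH (rem q Q)) => //; first exact: ltW.
    move=> x y qx xy yb noQ'; apply: f_aff => //; first exact: le_trans (ltW aq) qx.
    by move=> q' /memQ [->|]; [rewrite negb_and -leNgt qx | exact: noQ'].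
  by exists c; rewrite ?fc ?(le_trans (ltW aq) qc) ?cb.
- have [c /andP[ac cq] fc] : exists2 c, a <= c <= q & f c = 0.
    apply: (IH (rem q Q)) => //; [exact: ltW | exact: ltW |].
    move=> x y ax xy yq noQ'; apply: f_aff => //; first exact: le_trans yq (ltW qb).
    by move=> q' /memQ [->|]; [rewrite negb_and -!leNgt yq orbT | exact: noQ'].
  by exists c; rewrite ?fc ?ac ?(le_trans cq (ltW qb)).
Qed.

End PiecewiseAffineIVT.

Lemma prefix_nat (P : pred nat) n :
  (forall i j, (i <= j)%N -> (j < n)%N -> P j -> P i) ->
  exists2 a, (a <= n)%N & forall i, (i < n)%N -> P i = (i < a)%N.
Proof.
elim: n => [|n IH] P_down; first by exists 0%N.
have [a an Pa] : exists2 a, (a <= n)%N & forall i, (i < n)%N -> P i = (i < a)%N.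
  by apply: IH => i j ij jn; apply: P_down => //; apply: ltnW.
have [Pn|nPn] := boolP (P n).
- by exists n.+1 => // i; rewrite ltnS => le_in; rewrite (P_down i n).
- exists a => [|i]; first exact: leqW.
  rewrite ltnS leq_eqVlt => /predU1P[->|]; last exact: Pa.
  by rewrite (negbTE nPn) ltnNge an.
Qed.

Lemma prefix_ord d (P : pred 'I_d) :
  (forall i j : 'I_d, (i <= j)%N -> P j -> P i) ->
  exists2 a, (a <= d)%N & forall i : 'I_d, P i = (i < a)%N.
Proof.
move=> P_down; pose Pn n := [exists i : 'I_d, (val i == n) && P i].
have PnE (i : 'I_d) : Pn i = P i.
  by apply/existsP/idP => [[j /andP[/eqP/val_inj-> //]] | Pi]; exists i; rewrite eqxx.
have [|a ad Pa] := @prefix_nat Pn d.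
  move=> i j ij jd /existsP[J /andP[/eqP JE PJ]].
  apply/existsP; exists (Ordinal (leq_ltn_trans ij jd)); rewrite eqxx /=.
  by apply: (P_down _ J) => //=; rewrite JE.
by exists a => // i; rewrite -PnE Pa.
Qed.

Lemma sum_prefix_const (R : numDomainType) d m (a b : R) : (m <= d)%N ->
  \sum_(i < d) (if (i < m)%N then a else b) = m%:R * a + (d - m)%:R * b.
Proof.
move=> md; rewrite -(big_mkord xpredT (fun i => if (i < m)%N then a else b)).
rewrite (big_cat_nat (leq0n m) md) /=.
rewrite (eq_big_nat _ _ (F2 := fun=> a)) => [|i /andP[_ ->] //].
rewrite [X in _ + X](eq_big_nat _ _ (F2 := fun=> b)) => [|i /andP[le_mi _]].
  by rewrite !sumr_const_nat subn0 !mulr_natl.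
by rewrite ltnNge le_mi.
Qed.

Lemma coord1_ord (R : rcfType) d (u : 'I_d -> R) n (nd : (n < d)%N) :
  coord1 u n.+1 = u (Ordinal nd).
Proof. by rewrite /coord1 /= insubT. Qed.

Lemma coord1_out (R : rcfType) d (u : 'I_d -> R) n : (d <= n)%N -> coord1 u n.+1 = 0.
Proof. by move=> dn; rewrite /coord1 /= insubF // ltnNge dn. Qed.

(* Positions [js] and [je] are 1-based, as in the paper. *)
Definition block_shape (R : rcfType) d k (mu : R) (u x : 'I_d -> R) :=
  exists (js je : nat) (xi : R),
    [/\ (1 <= js <= k)%N, (k <= je <= d)%N,
        coord1 u je.+1 <= xi,
        (js == 1)%N || (xi <= coord1 u js.-1 / (1 + mu)) &
        forall i : 'I_d,
          x i = if (i.+1 < js)%N then u i / (1 + mu)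
                else if (i.+1 <= je)%N then xi
                else u i].

Section Clamp.
Variables (R : rcfType) (d k : nat) (mu : R) (u : 'I_d -> R).
Hypotheses (kd : (1 <= k < d)%N) (mu_gt0 : 0 < mu)
  (u_sorted : forall i j : 'I_d, (i <= j)%N -> u j <= u i) (u_ge0 : forall i, 0 <= u i).

(* [clamp c i] is the median of [u i / (1 + mu)], [c] and [u i]. *)
Definition clamp (c : R) i :=
  if (1 + mu) * c < u i then u i / (1 + mu) else if c <= u i then c else u i.

(* [slack i c = mu * c * w i] for the top weight [w] of [clamp c]. *)
Definition slack i (z : R) :=
  if (1 + mu) * z < u i then mu * z else if z <= u i then u i - z else 0.

Definition slack_total z := \sum_(i < d) slack i z - k%:R * mu * z.

Let mu1_gt0 : 0 < 1 + mu. Proof. exact: addr_gt0. Qed.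

Let mul_ubar i : (1 + mu) * (u i / (1 + mu)) = u i.
Proof. by rewrite mulrC mulfVK // gt_eqF. Qed.

Lemma lt_ubar i z : ((1 + mu) * z < u i) = (z < u i / (1 + mu)).
Proof. by rewrite -{1}(mul_ubar i) ltr_pM2l. Qed.

Lemma ubar_le_u i : u i / (1 + mu) <= u i.
Proof. by rewrite ler_pdivrMr // mulrDr mulr1 lerDl mulr_ge0 // ltW. Qed.

Lemma ubar_ge0 i : 0 <= u i / (1 + mu).
Proof. by rewrite divr_ge0 // ltW. Qed.

Lemma slack_low i z : z <= u i / (1 + mu) -> slack i z = mu * z.
Proof.
move=> z_le; rewrite /slack lt_ubar; case: ltP => // ubar_le.
have -> : z = u i / (1 + mu) by apply: le_anti; rewrite z_le ubar_le.
by rewrite ubar_le_u; have := mul_ubar i; lra.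
Qed.

Lemma slack_mid i z : u i / (1 + mu) <= z -> z <= u i -> slack i z = u i - z.
Proof. by move=> ubar_le z_le; rewrite /slack lt_ubar ltNge ubar_le /= z_le. Qed.

Lemma slack_high i z : u i <= z -> slack i z = 0.
Proof.
move=> u_le; rewrite /slack lt_ubar ltNge (le_trans (ubar_le_u i) u_le) /=.
by case: leP => // z_le; rewrite (@le_anti _ _ z (u i)) ?z_le ?subrr.
Qed.

Lemma slack_affine i x y : x <= y ->
  ~~ (x < u i / (1 + mu) < y) -> ~~ (x < u i < y) -> affine_on (slack i) x y.
Proof.
move=> xy n1 n2 l /andP[l0 l1].
have zx : x <= x + l * (y - x) by rewrite lerDl mulr_ge0 // subr_ge0.
have zy : x + l * (y - x) <= y.
  have : l * (y - x) <= 1 * (y - x) by apply: ler_wpM2r; rewrite // subr_ge0.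
  lra.
suff [a [b piece]] : exists a b, forall z, x <= z -> z <= y -> slack i z = a * z + b.
  by rewrite !piece ?lexx //; ring.
have [y_le|ubar_lt] := leP y (u i / (1 + mu)).
  by exists mu, 0 => z _ z_le; rewrite slack_low ?addr0 // (le_trans z_le).
have ubar_le : u i / (1 + mu) <= x by move: n1; rewrite ubar_lt andbT -leNgt.
have [y_le|u_lt] := leP y (u i).
  exists (-1), (u i) => z x_le z_le.
  by rewrite slack_mid ?(le_trans ubar_le) ?(le_trans z_le) //; ring.
have u_le : u i <= x by move: n2; rewrite u_lt andbT -leNgt.
by exists 0, 0 => z x_le _; rewrite slack_high ?(le_trans u_le) //; ring.
Qed.

Definition breakpoints := [seq u i | i <- enum 'I_d] ++ [seq u i / (1 + mu) | i <- enum 'I_d].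

Lemma slack_total_affine x y : x <= y ->
  (forall q, q \in breakpoints -> ~~ (x < q < y)) -> affine_on slack_total x y.
Proof.
move=> xy no_break l l01; rewrite /slack_total.
have slack_aff i : slack i (x + l * (y - x)) = slack i x + l * (slack i y - slack i x).
  apply: slack_affine => //; apply: no_break; rewrite mem_cat.
    by rewrite [X in _ || X]map_f ?orbT ?mem_enum.
  by rewrite map_f ?mem_enum.
by rewrite (eq_bigr _ (fun i _ => slack_aff i)) big_split /= -mulr_sumr sumrB; ring.
Qed.

Lemma clamp_cases c i : 0 <= c ->
  [\/ [/\ (1 + mu) * c < u i, c < u i / (1 + mu) & clamp c i = u i / (1 + mu)],
      [/\ u i <= (1 + mu) * c, c <= u i & clamp c i = c] |
      [/\ u i < c & clamp c i = u i]].
Proof.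
move=> c0; rewrite /clamp; case: ltP => h1; first by apply: Or31; rewrite -lt_ubar.
by case: (leP c (u i)) => h2; [apply: Or32 | apply: Or33].
Qed.

Lemma clamp_bounds c i : 0 <= c -> 0 <= clamp c i <= u i.
Proof.
move=> c0; case: (clamp_cases i c0) => [[_ _ ->]|[_ h ->]|[h ->]].
- by rewrite ubar_ge0 ubar_le_u.
- by rewrite c0 h.
- by rewrite u_ge0 lexx.
Qed.

Let u_eq0 i : ~~ (0 < u i) -> u i = 0.
Proof. by move=> u_le0; apply: le_anti; rewrite u_ge0 andbT leNgt. Qed.

Lemma clamp0_top_weight m : (m <= k)%N -> (forall i, (0 < u i) = (i < m)%N) ->
  exists w, is_top_weight k (clamp 0) w 0 /\ forall i, u i = (1 + mu * w i) * clamp 0 i.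
Proof.
move=> mk u_pos; have md : (m < d)%N by case/andP: kd => _; apply: leq_ltn_trans.
(* spread the missing weight [k - m] evenly over the zero entries *)
pose r : R := (k - m)%:R / (d - m)%:R.
have r0 : 0 <= r by rewrite divr_ge0.
have r1 : r <= 1.
  rewrite ler_pdivrMr ?ltr0n ?subn_gt0 // mul1r ler_nat leq_sub2r //.
  by case/andP: kd => _ /ltnW.
have clamp0E i : clamp 0 i = if 0 < u i then u i / (1 + mu) else 0.
  by rewrite /clamp mulr0; case: ifP => // /negbT/u_eq0 ->; rewrite lexx.
exists (fun i => if 0 < u i then 1 else r); split; first split.
- by move=> i; case: ifP; rewrite ?lexx ?ler01 ?r0 ?r1.
- rewrite (eq_bigr (fun i : 'I_d => if (i < m)%N then 1 else r)) => [|i _]; last by rewrite u_pos.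
  rewrite sum_prefix_const ?(ltnW md) // mulr1 mulrC divfK ?pnatr_eq0 -?lt0n ?subn_gt0 //.
  by rewrite -natrD subnKC.
- by move=> i; rewrite clamp0E; case: ifP => // _; rewrite expr0n ltxx.
- by move=> i; rewrite ltNge sqr_ge0.
- move=> i; rewrite clamp0E; case: ifP => [_|/negbT/u_eq0 ->]; last by rewrite mulr0.
  by rewrite mulr1 mul_ubar.
Qed.

Lemma slack_total_root m : (k < m)%N -> (m <= d)%N -> (forall i, (0 < u i) = (i < m)%N) ->
  exists2 c, 0 < c & slack_total c = 0.
Proof.
move=> km md u_pos.
have m0 : (0 < m)%N by case/andP: kd => k1 _; exact: leq_trans k1 (ltnW km).
have last_pos : (m.-1 < d)%N by rewrite prednK.
have d0 : (0 < d)%N by exact: leq_trans m0 md.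
(* the root lies between the smallest positive [u i / (1 + mu)] and the largest [u i] *)
pose a := u (Ordinal last_pos) / (1 + mu); pose b := u (Ordinal d0).
have b_ge0 : 0 <= b by exact: u_ge0.
have a_gt0 : 0 < a by rewrite divr_gt0 // u_pos /= prednK.
have ab : a <= b by apply: le_trans (ubar_le_u _) (u_sorted _).
have Ga : 0 <= slack_total a.
  rewrite /slack_total (eq_bigr (fun i : 'I_d => if (i < m)%N then mu * a else 0)) => [|i _].
    rewrite sum_prefix_const // mulr0 addr0.
    have : (k%:R : R) <= m%:R by rewrite ler_nat ltnW.
    by have := mulr_gt0 mu_gt0 a_gt0; nra.
  case: ifP => im; last by rewrite slack_high // u_eq0 ?u_pos ?im // ltW.
  by apply: slack_low; rewrite ler_pM2r ?invr_gt0 //; apply: u_sorted; rewrite -ltnS prednK.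
have Gb : slack_total b <= 0.
  rewrite /slack_total big1 => [|i _]; last exact/slack_high/u_sorted.
  by rewrite sub0r oppr_le0 !mulr_ge0 // ltW.
have [c /andP[ac _] Gc] := piecewise_affine_root ab Ga Gb
  (fun x y _ xy _ => @slack_total_affine x y xy).
by exists c => //; exact: lt_le_trans ac.
Qed.

Lemma root_top_weight c : 0 < c -> slack_total c = 0 ->
  let w i := slack i c / (mu * c) in
  is_top_weight k (clamp c) w (c ^+ 2) /\ forall i, u i = (1 + mu * w i) * clamp c i.
Proof.
move=> c_gt0 Gc w; have muc_gt0 : 0 < mu * c by exact: mulr_gt0.
have cases i : [\/ [/\ (1 + mu) * c < u i, clamp c i = u i / (1 + mu) & slack i c = mu * c],
    [/\ u i <= (1 + mu) * c, c <= u i, clamp c i = c & slack i c = u i - c] |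
    [/\ u i < c, clamp c i = u i & slack i c = 0]].
  case: (clamp_cases i (ltW c_gt0)) => [[h1 h2 ->]|[h1 h2 ->]|[h1 ->]].
  - by apply: Or31; rewrite slack_low // ltW.
  - by apply: Or32; rewrite slack_mid // ler_pdivrMr // mulrC.
  - by apply: Or33; rewrite slack_high // ltW.
rewrite /w; split; first split.
- move=> i; case: (cases i) => [[_ _ ->]|[h1 h2 _ ->]|[_ _ ->]].
  + by rewrite divff ?gt_eqF // lexx ler01.
  + rewrite divr_ge0 ?subr_ge0 ?(ltW muc_gt0) //= ler_pdivrMr // mul1r; lra.
  + by rewrite mul0r lexx ler01.
- rewrite -mulr_suml; move/eqP: Gc; rewrite /slack_total subr_eq0 => /eqP ->.
  by rewrite -(mulrA _ mu c) mulfK ?gt_eqF.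
- move=> i; case: (cases i) => [[_ -> ->]|[_ _ -> _]|[h -> _]] lt_c.
  + by rewrite divff ?gt_eqF.
  + by rewrite ltxx in lt_c.
  + by have := u_ge0 i; nra.
- move=> i; case: (cases i) => [[h -> _]|[_ _ -> _]|[_ _ ->]] lt_c; last by rewrite mul0r.
  + have : c < u i / (1 + mu) by rewrite -lt_ubar.
    by have := ubar_ge0 i; nra.
  + by rewrite ltxx in lt_c.
- move=> i; case: (cases i) => [[_ -> ->]|[_ _ -> ->]|[_ -> ->]].
  + by rewrite divff ?gt_eqF // mulr1 mul_ubar.
  + by field; rewrite ?gt_eqF.
  + by rewrite mul0r mulr0 addr0 mul1r.
Qed.

Lemma clamp_top_weight : exists c (w : 'I_d -> R),
  [/\ 0 <= c, is_top_weight k (clamp c) w (c ^+ 2) & forall i, u i = (1 + mu * w i) * clamp c i].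
Proof.
have [m md u_pos] : exists2 m, (m <= d)%N & forall i : 'I_d, (0 < u i) = (i < m)%N.
  by apply: prefix_ord => i j ij /lt_le_trans; apply; apply: u_sorted.
have [mk|km] := leqP m k.
  have [w [top_w uE]] := clamp0_top_weight mk u_pos.
  by exists 0, w; rewrite expr0n.
have [c c_gt0 Gc] := slack_total_root km md u_pos.
have [top_w uE] := root_top_weight c_gt0 Gc.
by exists c, (fun i => slack i c / (mu * c)); split => //; exact: ltW.
Qed.

Section Levels.
Variables (c : R) (w : 'I_d -> R).
Hypotheses (c_ge0 : 0 <= c) (top_w : is_top_weight k (clamp c) w (c ^+ 2))
  (uE : forall i, u i = (1 + mu * w i) * clamp c i).

Lemma clamp_levels : exists a e,
  [/\ (a <= k <= e)%N, (e <= d)%N, forall i, ((1 + mu) * c < u i) = (i < a)%N,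
      forall i, (c <= u i) = (i < e)%N & forall i : 'I_d, (i < a)%N -> w i = 1].
Proof.
case: top_w => w01 sw w1 w0.
have [a ad lt_u] : exists2 a, (a <= d)%N & forall i : 'I_d, ((1 + mu) * c < u i) = (i < a)%N.
  by apply: prefix_ord => i j ij /lt_le_trans; apply; apply: u_sorted.
have [e ed le_u] : exists2 e, (e <= d)%N & forall i : 'I_d, (c <= u i) = (i < e)%N.
  by apply: prefix_ord => i j ij /le_trans; apply; apply: u_sorted.
have mu_c_ge0 : 0 <= mu * c by rewrite mulr_ge0 // ltW.
have wA (i : 'I_d) : (i < a)%N -> w i = 1.
  rewrite -lt_u => hi; apply: w1; case: (clamp_cases i c_ge0) => [[_ h ->]|[h _ _]|[h _]].
  - by rewrite ltrXn2r.
  - by rewrite leNgt hi in h.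
  - by move: hi; rewrite mulrDl mul1r; lra.
have wE (i : 'I_d) : (e <= i)%N -> w i = 0.
  rewrite leqNgt -le_u -ltNge => hi; apply: w0.
  case: (clamp_cases i c_ge0) => [[h _ _]|[_ h _]|[_ ->]]; last by have := u_ge0 i; nra.
    by move: h; rewrite mulrDl mul1r; lra.
  by rewrite leNgt hi in h.
have indicator_sum b : (b <= d)%N -> \sum_(i < d) (if (i < b)%N then 1 else 0) = b%:R :> R.
  by move=> bd; rewrite sum_prefix_const // mulr1 mulr0 addr0.
exists a, e; split => //; apply/andP; split; rewrite -(ler_nat R) -sw.
- rewrite -indicator_sum //; apply: ler_sum => i _.
  by case: ifP => [/wA -> //|_]; case/andP: (w01 i).
- rewrite -indicator_sum //; apply: ler_sum => i _.
  by case: ifP => [_|/negbT]; [case/andP: (w01 i) | rewrite -leqNgt => /wE ->].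
Qed.

Lemma clamp_tail :
  (forall i, ((1 + mu) * c < u i) = (i < k)%N) -> (forall i : 'I_d, (i < k)%N -> w i = 1) ->
  forall i : 'I_d, (k <= i)%N -> clamp c i = u i /\ u i <= c.
Proof.
case: top_w => w01 sw _ _ lt_u wA; have kd' : (k <= d)%N by case/andP: kd => _ /ltnW.
have tail0 : \sum_(i < d) (if (i < k)%N then 0 else w i) = 0.
  have split : \sum_(i < d) w i = k%:R + \sum_(i < d) (if (i < k)%N then 0 else w i).
    rewrite -[k%:R]mulr1 -[X in X + _]addr0 -[0 in X in X + _](mulr0 (d - k)%:R).
    rewrite -sum_prefix_const // -big_split.
    by apply: eq_bigr => i _ /=; case: ifP => [/wA ->|_]; rewrite ?addr0 ?add0r.
  by move: split; rewrite sw; lra.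
move=> i ki.
have wi0 : w i = 0.
  have := @psumr_eq0P _ _ xpredT (fun j : 'I_d => if (j < k)%N then 0 else w j).
  move=> /(_ _ tail0 i isT); rewrite ltnNge ki; apply => j _.
  by case: ifP => _ //; case/andP: (w01 j).
have := uE i; rewrite wi0 mulr0 addr0 mul1r => ui.
case: (clamp_cases i c_ge0) => [[h _ _]|[_ _ ci]|[h ->]]; last by rewrite ltW.
- by rewrite lt_u ltnNge ki in h.
- by split; rewrite ui // ci.
Qed.

Lemma clamp_block_shape : block_shape k mu u (clamp c).
Proof.
have [a [e [/andP[ak ke] ed lt_u le_u wA]]] := clamp_levels.
(* when the [k] largest entries carry all the weight, the constant block is position [k] alone *)
have [ak'|ka] := ltnP a k; last first.
  have a_eq : a = k by apply/eqP; rewrite eqn_leq ak ka.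
  subst a; have tail := clamp_tail lt_u wA; case/andP: kd => k_gt0 kd'.
  have km1 : (k.-1 < d)%N by rewrite prednK // ltnW.
  have clamp_low (i : 'I_d) : (i < k)%N -> clamp c i = u i / (1 + mu) by rewrite /clamp lt_u => ->.
  pose ik := Ordinal km1.
  have c_lt : c < u ik / (1 + mu) by rewrite -lt_ubar lt_u /= prednK.
  exists k, k, (u ik / (1 + mu)); split; rewrite ?k_gt0 ?leqnn ?(ltnW kd') //.
  - rewrite (coord1_ord _ kd'); apply: le_trans (ltW c_lt).
    by have [] := tail (Ordinal kd').
  - have [->//|k1] := eqVneq k 1; have km2 : (k.-2 < d)%N by lia.
    have -> : k.-1 = k.-2.+1 by lia.
    by rewrite (coord1_ord _ km2) ler_pM2r ?invr_gt0 //; apply: u_sorted => /=; lia.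
  - move=> i; have [i_lt|k_le] := ltnP i.+1 k; first by rewrite clamp_low // ltnW.
    have [i_le|k_lt] := leqP i.+1 k; last by have [] := tail i k_lt.
    have -> : i = ik by apply: val_inj => /=; lia.
    by rewrite clamp_low //= prednK.
exists a.+1, e, c; split; rewrite ?ltnS ?ak' ?ke ?ed //.
- have [ed'|de] := ltnP e d; last by rewrite coord1_out.
  by rewrite coord1_ord; apply/ltW; rewrite ltNge le_u /= ltnn.
- case: a ak' lt_u {ak wA} => [|a] // ak' lt_u /=.
  have ad : (a < d)%N by case/andP: kd => _; lia.
  by rewrite (coord1_ord _ ad); apply: ltW; rewrite -lt_ubar lt_u /=.
- by move=> i; rewrite ltnS -lt_u -le_u.
Qed.

End Levels.

End Clamp.

Lemma obj_min_block_shape (R : rcfType) d k (mu : R) (u : 'I_d -> R) :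
  (1 <= k < d)%N -> 0 < mu ->
  (forall i j : 'I_d, (i <= j)%N -> u j <= u i) -> (forall i, 0 <= u i) ->
  exists x : 'I_d -> R,
    [/\ forall y, obj k mu u x + \sum_(i < d) (y i - x i) ^+ 2 <= obj k mu u y,
        forall i, 0 <= x i <= u i & block_shape k mu u x].
Proof.
move=> kd mu_gt0 u_sorted u_ge0.
have [c [w [c_ge0 top_w uE]]] := clamp_top_weight kd mu_gt0 u_sorted u_ge0.
exists (clamp mu u c); split.
- by apply: obj_growth top_w uE; [case/andP: kd | exact: ltW].
- by move=> i; apply: clamp_bounds.
- exact: clamp_block_shape top_w uE.
Qed.

Section Prox.
Variables (R : rcfType) (d : nat).
Implicit Types (v y : 'I_d -> R).

Lemma sqr_sub_norm_le (a b : R) : (`|a| - `|b|) ^+ 2 <= (a - b) ^+ 2.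
Proof.
have ab : a * b <= `|a| * `|b| by rewrite -normrM ler_norm.
have -> : (`|a| - `|b|) ^+ 2 = `|a| ^+ 2 + `|b| ^+ 2 - 2 * (`|a| * `|b|) by ring.
have -> : (a - b) ^+ 2 = a ^+ 2 + b ^+ 2 - 2 * (a * b) by ring.
by rewrite !real_normK ?num_real //; lra.
Qed.

Definition sign_defect v y := \sum_(i < d) ((v i - y i) ^+ 2 - (`|v i| - `|y i|) ^+ 2).

Lemma sign_defect_ge0 v y : 0 <= sign_defect v y.
Proof. by apply: sumr_ge0 => i _; rewrite subr_ge0 sqr_sub_norm_le. Qed.

Lemma prox_objE k (mu : R) (s : {perm 'I_d}) v y :
  2 * prox_obj k mu v y =
  obj k mu (permv s (fun i => `|v i|)) (fun j => `|y (s j)|) + sign_defect v y.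
Proof.
rewrite /prox_obj /obj (@topk_norm_perm_abs _ _ _ s y (fun j => `|y (s j)|)) => [|i]; last first.
  by rewrite normr_id.
rewrite !norm2_sqr /sign_defect sumrB.
have -> : \sum_(i < d) (`|y (s i)| - permv s (fun i => `|v i|) i) ^+ 2 =
          \sum_(i < d) (`|v i| - `|y i|) ^+ 2.
  rewrite [RHS](reindex_inj (@perm_inj _ s)); apply: eq_bigr => i _.
  by rewrite /permv; ring.
by field.
Qed.

Lemma norm_sgnv_mul v i (a : R) : 0 <= a -> `|sgnv v i * a| = a.
Proof.
by move=> a0; rewrite normrM (ger0_norm a0) /sgnv; case: ifP; rewrite ?normrN normr1 mul1r.
Qed.

Lemma sign_defect_sgnv v (z : 'I_d -> R) : (forall i, 0 <= z i) ->
  sign_defect v (fun i => sgnv v i * z i) = 0.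
Proof.
move=> z_ge0; apply: big1 => i _; rewrite norm_sgnv_mul // /sgnv.
by case: ifP => v0; [rewrite ger0_norm | rewrite ltr0_norm ?ltNge ?v0]; rewrite //; ring.
Qed.

Lemma sign_defect_eq0 v y : sign_defect v y = 0 ->
  forall i, (v i - y i) ^+ 2 = (`|v i| - `|y i|) ^+ 2.
Proof.
move=> D0 i; apply/eqP; rewrite -subr_eq0; apply/eqP; move: i isT; apply/psumr_eq0P => //.
by move=> i _; rewrite subr_ge0 sqr_sub_norm_le.
Qed.

Lemma sgnv_norm v y i : (v i - y i) ^+ 2 = (`|v i| - `|y i|) ^+ 2 -> (v i = 0 -> y i = 0) ->
  y i = sgnv v i * `|y i|.
Proof.
rewrite /sgnv => sq_eq v0_y0; have [v_gt0|v_lt0|v0] := ltrgtP 0 (v i).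
- rewrite mul1r; have [y_ge0|y_lt0] := lerP 0 (y i); first by rewrite ger0_norm.
  by move: sq_eq; rewrite (gtr0_norm v_gt0) (ltr0_norm y_lt0); nra.
- rewrite mulN1r; have [y_ge0|y_lt0] := lerP 0 (y i); last by rewrite ltr0_norm // opprK.
  move: sq_eq; rewrite (ltr0_norm v_lt0) (ger0_norm y_ge0) => sq_eq.
  have -> : y i = 0 by nra.
  by rewrite oppr0.
- by rewrite v0_y0 -?v0 // normr0 mulr0.
Qed.

Lemma prox_sgnv_argmin k (mu : R) v (s : {perm 'I_d}) (x : 'I_d -> R) :
  let u := permv s (fun i => `|v i|) in
  (forall y, obj k mu u x + \sum_(i < d) (y i - x i) ^+ 2 <= obj k mu u y) ->
  (forall i, 0 <= x i <= u i) ->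
  let p := fun i => sgnv v i * permv (s^-1)%g x i in
  is_argmin (prox_obj k mu v) p /\ (forall y, is_argmin (prox_obj k mu v) y -> y = p).
Proof.
move=> u grow x_bds p.
have x_ge0 i : 0 <= x i by case/andP: (x_bds i).
have prox_p : 2 * prox_obj k mu v p = obj k mu u x.
  rewrite (prox_objE _ _ s) sign_defect_sgnv => [|i]; last exact: x_ge0.
  rewrite addr0; congr (obj _ _ _ _); apply: functional_extensionality => j.
  by rewrite /p /permv permK norm_sgnv_mul.
have prox_ge y : obj k mu u x + \sum_(j < d) (`|y (s j)| - x j) ^+ 2 + sign_defect v y <=
    2 * prox_obj k mu v y.
  by rewrite (prox_objE _ _ s) lerD2r; apply: grow.
have dist_ge0 y : 0 <= \sum_(j < d) (`|y (s j)| - x j) ^+ 2.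
  by apply: sumr_ge0 => j _; apply: sqr_ge0.
have p_min : is_argmin (prox_obj k mu v) p.
  by move=> y; have := prox_ge y; have := dist_ge0 y; have := sign_defect_ge0 v y; lra.
split=> // y y_min; apply: functional_extensionality => i.
have y_le := y_min p; have y_ge := prox_ge y.
have dist0 := dist_ge0 y; have D_ge0 := sign_defect_ge0 v y.
have /sign_defect_eq0 sq_eq : sign_defect v y = 0 by lra.
have y_abs j : `|y (s j)| = x j.
  apply/eqP; rewrite -subr_eq0; apply/eqP.
  by apply: (sum_sqr_eq0 (f := fun j => `|y (s j)| - x j)); lra.
rewrite /p /permv -y_abs permKV; apply: sgnv_norm => // v0.
have := x_bds ((s^-1)%g i); rewrite -y_abs /u /permv permKV v0 normr0 => /andP[_].
by rewrite normr_le0 => /eqP.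
Qed.

End Prox.

Unset Implicit Arguments.

Theorem mainTheorem7 (R : rcfType) (d k : nat) (mu : R) :
  (1 <= k < d)%N -> 0 < mu ->
  (forall u : 'I_d -> R,
     (forall i j : 'I_d, (i <= j)%N -> u j <= u i) ->
     (forall i : 'I_d, 0 <= u i) ->
     forall xt : 'I_d -> R, is_argmin (obj k mu u) xt ->
     exists (js je : nat) (xi : R),
       [/\ (1 <= js <= k)%N, (k <= je <= d)%N,
           coord1 u je.+1 <= xi,
           (js == 1)%N || (xi <= coord1 u js.-1 / (1 + mu)) &
           forall i : 'I_d,
             xt i = if (i.+1 < js)%N then u i / (1 + mu)
                    else if (i.+1 <= je)%N then xi
                    else u i])
  /\
  (forall (v : 'I_d -> R) (s : {perm 'I_d}),
     (forall i j : 'I_d, (i <= j)%N -> `|v (s j)| <= `|v (s i)|) ->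
     forall xt : 'I_d -> R,
       is_argmin (obj k mu (permv s (fun i => `|v i|))) xt ->
       let p := fun i => sgnv v i * permv s^-1 xt i in
       is_argmin (prox_obj k mu v) p /\
       (forall y, is_argmin (prox_obj k mu v) y -> y = p)).
Proof.
move=> kd mu_gt0; split.
  move=> u u_sorted u_ge0 xt xt_min.
  have [x [grow _ shape]] := obj_min_block_shape kd mu_gt0 u_sorted u_ge0.
  by rewrite (argmin_eq_of_growth grow xt_min).
move=> v s v_sorted xt xt_min.
have u_ge0 i : 0 <= permv s (fun i => `|v i|) i by exact: normr_ge0.
have [x [grow x_bds _]] := obj_min_block_shape kd mu_gt0 v_sorted u_ge0.
by rewrite (argmin_eq_of_growth grow xt_min); exact: prox_sgnv_argmin.
Qed.
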